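(* Let $\Lambda\in\mathcal H$ be of integral type and let $\tilde\Lambda\in\mathcal H$ be of $\Lambda$-integral type, with associated left coideal subalgebra $\mathcal A_{\tilde\Lambda}$ and homomorphism $\pi:\mathcal A_{\tilde\Lambda}\to\mathcal H$. Then for every $a\in\mathcal A_{\tilde\Lambda}$, $$(1\otimes a)\Delta(\tilde\Lambda)=(S(\pi(a))\otimes 1)\Delta(\tilde\Lambda).$$ Moreover: (1) $\mathcal V_{\tilde\Lambda}\subset\mathcal A_{\tilde\Lambda}$, and $\mathcal V_{\tilde\Lambda}$ is a left ideal of $\mathcal A_{\tilde\Lambda}$ which is faithful as a left $\mathcal A_{\tilde\Lambda}$-module (i.e. if $a\in\mathcal A_{\tilde\Lambda}$ and $av=0$ for all $v\in\mathcal V_{\tilde\Lambda}$ then $a=0$); (2) $\dim\mathcal A_{\tilde\Lambda}<\infty$; (3) ${}_{\tilde\Lambda}\mathcal V$ is a right $\mathcal A_{\tilde\Lambda}$-module via $x\cdot a:=S(\pi(a))x$ for $a\in\mathcal A_{\tilde\Lambda}$, $x\in{}_{\tilde\Lambda}\mathcal V$; (4) the linear map $U:\mathcal V_{\tilde\Lambda}'\to{}_{\tilde\Lambda}\mathcal V$, $U(\nu)=(\mathrm{id}\otimes\nu)(\Delta(\tilde\Lambda))$, is an isomorphism of right $\mathcal A_{\tilde\Lambda}$-modules, where $\mathcal V_{\tilde\Lambda}'$ carries the right module structure $(\nu\cdot a)(v)=\nu(av)$; (5) $\tilde\Lambda$ is non-degenerate if and only if $\mathcal V_{\tilde\Lambda}=\mathcal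 A_{\tilde\Lambda}$.
   Context: $k$ is a field; $\mathcal H$ is a Hopf algebra over $k$ with comultiplication $\Delta$, counit $\varepsilon$, invertible antipode $S$, and $\mathcal H'$ denotes its linear dual. A left coideal is a subspace $V\subset\mathcal H$ with $\Delta(V)\subset\mathcal H\otimes V$; a left coideal subalgebra is a subalgebra containing $1$ which is a left coideal. For $\Lambda\in\mathcal H$ put $\mathcal V_\Lambda=\{(\nu\otimes\mathrm{id})\Delta(\Lambda):\nu\in\mathcal H'\}$ and ${}_\Lambda\mathcal V=\{(\mathrm{id}\otimes\nu)\Delta(\Lambda):\nu\in\mathcal H'\}$. A non-zero $\Lambda\in\mathcal H$ is of integral type if $\Delta(\Lambda)(1\otimes\Lambda)=\Lambda\otimes\Lambda$. For $\Lambda$ of integral type, a non-zero $\tilde\Lambda\in\mathcal H$ is of $\Lambda$-integral type if $\Delta(\tilde\Lambda)(1\otimes\tilde\Lambda)=\Lambda\otimes\tilde\Lambda$; it is called non-degenerate if $1\in\mathcal V_{\tilde\Lambda}$. For such $\tilde\Lambda$, $\mathcal A_{\tilde\Lambda}=\{a\in\mathcal H:\ \Delta(a)(1\otimes\tilde\Lambda)=b\otimes\tilde\Lambda\text{ for some }b\in\mathcal H\}$; this is a left coideal subalgebra, the element $b$ is uniquely determined by $a$ and denoted $\pi(a)$, and $\pi:\mathcal A_{\tilde\Lambda}\to\mathcal H$ is an injective algebra homomorphism. *)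

(* A Hopf algebra over a field k with invertible antipode,
   tensors in H (x) H represented as finite formal sums (seq (H * H)). *)
From HB Require Import structures.
From mathcomp Require Import all_boot all_order all_algebra.
From Stdlib Require Import ClassicalEpsilon.
Set Implicit Arguments. Unset Strict Implicit. Unset Printing Implicit Defensive.
Import GRing.Theory.
Local Open Scope ring_scope.

Section Hopf.
Variables (k : fieldType) (H : algType k).

Definition lfun (f : H -> k) : Prop :=
  forall (c : k) (x y : H), f (c *: x + y) = c * f x + f y.

(* (nu (x) id) t  and  (id (x) nu) t  for a formal sum t = sum p.1 (x) p.2 *)
Definition slice_l (f : H -> k) (t : seq (H * H)) : H := \sum_(p <- t) f p.1 *: p.2.
Definition slice_r (f : H -> k) (t : seq (H * H)) : H := \sum_(p <- t) f p.2 *: p.1.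

(* equality in H (x) H (over a field, left slices by all functionals separate tensors) *)
Definition teq2 (t t' : seq (H * H)) : Prop :=
  forall f, lfun f -> slice_l f t = slice_l f t'.

Definition teq3 (t t' : seq (H * H * H)) : Prop :=
  forall f g, lfun f -> lfun g ->
    \sum_(p <- t) (f p.1.1 * g p.1.2) *: p.2 = \sum_(p <- t') (f p.1.1 * g p.1.2) *: p.2.

Definition tmul2 (t t' : seq (H * H)) : seq (H * H) :=
  [seq (p.1 * q.1, p.2 * q.2) | p <- t, q <- t'].
Definition tscale (c : k) (t : seq (H * H)) : seq (H * H) :=
  [seq (c *: p.1, p.2) | p <- t].

Record is_hopf (D : H -> seq (H * H)) (e : H -> k) (S : H -> H) : Prop := {
  cop_lin : forall c x y, teq2 (D (c *: x + y)) (tscale c (D x) ++ D y);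
  cop_mul : forall x y, teq2 (D (x * y)) (tmul2 (D x) (D y));
  cop_one : teq2 (D 1) [:: (1, 1)];
  coassoc : forall x,
    teq3 [seq ((q.1, q.2), p.2) | p <- D x, q <- D p.1]
         [seq ((p.1, q.1), q.2) | p <- D x, q <- D p.2];
  eps_lin : lfun e;
  eps_mul : forall x y, e (x * y) = e x * e y;
  eps_one : e 1 = 1;
  counit_l : forall x, \sum_(p <- D x) e p.1 *: p.2 = x;
  counit_r : forall x, \sum_(p <- D x) e p.2 *: p.1 = x;
  ant_lin : forall c x y, S (c *: x + y) = c *: S x + S y;
  ant_l : forall x, \sum_(p <- D x) S p.1 * p.2 = e x *: 1;
  ant_r : forall x, \sum_(p <- D x) p.1 * S p.2 = e x *: 1;
  ant_bij : bijective S }.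

Variable D : H -> seq (H * H).

Definition integral_type (L : H) : Prop :=
  L != 0 /\ teq2 (tmul2 (D L) [:: (1, L)]) [:: (L, L)].

Definition L_integral_type (L Lt : H) : Prop :=
  Lt != 0 /\ teq2 (tmul2 (D Lt) [:: (1, Lt)]) [:: (L, Lt)].

Definition Vl (Lt : H) (x : H) : Prop := exists nu, lfun nu /\ x = slice_l nu (D Lt).
Definition Vr (Lt : H) (x : H) : Prop := exists nu, lfun nu /\ x = slice_r nu (D Lt).

Definition nondegenerate_int (Lt : H) : Prop := Vl Lt 1.

Definition pi_rel (Lt a b : H) : Prop := teq2 (tmul2 (D a) [:: (1, Lt)]) [:: (b, Lt)].

Definition Acoid (Lt : H) (a : H) : Prop := exists b, pi_rel Lt a b.

Definition piA (Lt : H) (a : H) : H := epsilon (inhabits 0) (pi_rel Lt a).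

Definition Uslice (Lt : H) (nu : H -> k) : H := slice_r nu (D Lt).

End Hopf.

Definition fin_dim (k : fieldType) (V : lmodType k) (P : V -> Prop) : Prop :=
  exists s : seq V, forall x, P x ->
    exists c : 'I_(size s) -> k, x = \sum_(i < size s) c i *: s`_i.

From HB Require Import structures.
From mathcomp Require Import all_boot all_order all_algebra.
From mathcomp Require Import classical_sets.
From Stdlib Require Import ClassicalEpsilon Classical.
Import GRing.Theory.
Local Open Scope ring_scope.
Set Implicit Arguments. Unset Strict Implicit. Unset Printing Implicit Defensive.

(* For the relation Delta(a)(1 (x) Lt) = pi(a) (x) Lt we show that pi is a well defined
   injective algebra homomorphism and prove the twist identity
   (1 (x) a) Delta(Lt) = (S(pi a) (x) 1) Delta(Lt).  It makes V a left ideal, W stable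
   under S(pi a), and gives faithfulness: a V = 0 forces (S(pi a) (x) 1) Delta(Lt) = 0,
   so pi(a) = 0 and a = 0.  Using Delta(Lt)(1 (x) Lt) = L (x) Lt, V lies in A; A is finite
   dimensional since V is finitely spanned and A acts faithfully on it; U is the
   transpose of the slice map nu |-> (nu (x) id) Delta(Lt). *)

Section LinearMaps.
Variables (k : fieldType) (U V W : lmodType k).

Lemma scalar_mapZ (f : U -> k) : scalar f -> forall a x, f (a *: x) = a * f x.
Proof. by move=> hf a x; have := scalable_linear hf a x. Qed.

Lemma scalar_map0 (f : U -> k) : scalar f -> f 0 = 0.
Proof. by move=> hf; rewrite -(scale0r 0) (scalar_mapZ hf) mul0r. Qed.

Lemma scalar_mapD (f : U -> k) : scalar f -> forall x y, f (x + y) = f x + f y.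
Proof. by move=> hf x y; rewrite -[x]scale1r hf mul1r scale1r. Qed.

Lemma scalar_mapB (f : U -> k) : scalar f -> forall x y, f (x - y) = f x - f y.
Proof. exact: zmod_morphism_linear. Qed.

Lemma scalar_map_sum (f : U -> k) : scalar f ->
  forall (I : Type) (r : seq I) (P : pred I) (F : I -> U),
  f (\sum_(i <- r | P i) F i) = \sum_(i <- r | P i) f (F i).
Proof. by move=> hf; apply: (big_morph f (scalar_mapD hf) (scalar_map0 hf)). Qed.

Lemma linear_mapD (F : U -> V) : linear F -> forall x y, F (x + y) = F x + F y.
Proof. by move=> hF x y; rewrite -[x]scale1r hF !scale1r. Qed.

Lemma linear_mapZ (F : U -> V) : linear F -> forall a x, F (a *: x) = a *: F x.
Proof. by move=> hF a x; have := scalable_linear hF a x. Qed.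

Lemma linear_map0 (F : U -> V) : linear F -> F 0 = 0.
Proof. by move=> hF; rewrite -(scale0r 0) (linear_mapZ hF) scale0r. Qed.

Lemma linear_map_sum (F : U -> V) : linear F ->
  forall (I : Type) (r : seq I) (P : pred I) (G : I -> U),
  F (\sum_(i <- r | P i) G i) = \sum_(i <- r | P i) F (G i).
Proof. by move=> hF; apply: (big_morph F (linear_mapD hF) (linear_map0 hF)). Qed.

Lemma linear_map_sumZ (F : U -> V) : linear F ->
  forall (I : Type) (r : seq I) (c : I -> k) (G : I -> U),
  F (\sum_(i <- r) c i *: G i) = \sum_(i <- r) c i *: F (G i).
Proof.
by move=> hF I r c G; rewrite (linear_map_sum hF); apply: eq_bigr => i _; rewrite (linear_mapZ hF).
Qed.

Lemma linear_id : linear (fun x : U => x).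
Proof. by []. Qed.

Lemma scalar_comp (f : V -> k) (F : U -> V) :
  scalar f -> linear F -> scalar (fun x => f (F x)).
Proof. by move=> hf hF c x y; rewrite hF hf. Qed.

Lemma linear_comp (F : V -> W) (G : U -> V) :
  linear F -> linear G -> linear (fun x => F (G x)).
Proof. by move=> hF hG c x y; rewrite hG hF. Qed.

Lemma linear_scale_by (f : U -> k) (v : V) : scalar f -> linear (fun y => f y *: v).
Proof. by move=> hf c x y; rewrite hf scalerDl scalerA. Qed.

Lemma linear_scale (c : k) (F : U -> V) : linear F -> linear (fun y => c *: F y).
Proof. by move=> hF d x y; rewrite hF scalerDr !scalerA mulrC. Qed.

Lemma linear_sub (F G : U -> V) : linear F -> linear G -> linear (fun x => F x - G x).
Proof. by move=> hF hG c x y; rewrite hF hG scalerBr opprD addrACA. Qed.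

Lemma linear_sum_maps (I : Type) (r : seq I) (F : I -> U -> V) :
  (forall i, linear (F i)) -> linear (fun x => \sum_(i <- r) F i x).
Proof.
by move=> hF c x y; rewrite scaler_sumr -big_split; apply: eq_bigr => i _; rewrite hF.
Qed.

Lemma scalar_mulr (f : U -> k) (c : k) : scalar f -> scalar (fun x => f x * c).
Proof. by move=> hf d x y; rewrite hf mulrDl mulrA. Qed.

End LinearMaps.

Lemma linear_mull (k : fieldType) (H : algType k) (a : H) : linear (fun y : H => a * y).
Proof. by move=> c x y; rewrite mulrDr scalerAr. Qed.

Lemma linear_mulr (k : fieldType) (H : algType k) (a : H) : linear (fun y : H => y * a).
Proof. by move=> c x y; rewrite mulrDl scalerAl. Qed.

Section Separation.
Variables (k : fieldType) (U : lmodType k).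

(* Subsets of U closed under addition and scaling (subspaces, or the empty set);
   this notion, unlike that of subspace, is closed under unions of arbitrary chains. *)
Definition closed_set (M : set U) : Prop :=
  (forall a b, M a -> M b -> M (a + b)) /\ (forall (c : k) a, M a -> M (c *: a)).

(* Zorn's lemma: a maximal subspace M avoiding x != 0 is a complement of the
   line k x, i.e. every y is congruent modulo M to a multiple of x. *)
Lemma line_complement (x : U) : x != 0 -> exists M : set U,
  [/\ closed_set M, M 0, ~ M x & forall y, exists c : k, M (y - c *: x)].
Proof.
move=> xn0.
pose P : set (set U) := fun M => closed_set M /\ ~ M x.
have [A [[[AD AZ] Ax] Amax]] : exists A : set U, P A /\ (forall B, (A `<` B)%classic -> ~ P B).
  apply: Zorn_bigcup => F FP Ftot; split; [split|].
  - move=> a b [X FX Xa] [Y FY Yb].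
    have [XY|YX] := Ftot _ _ FX FY.
    + by exists Y => //; apply: (proj1 (proj1 (FP _ FY))) => //; apply: XY.
    + by exists X => //; apply: (proj1 (proj1 (FP _ FX))) => //; apply: YX.
  - by move=> c a [X FX Xa]; exists X => //; apply: (proj2 (proj1 (FP _ FX))).
  - by move=> [X FX Xx]; apply: (proj2 (FP _ FX)).
pose A0 z := A z \/ z = 0.
have A0D a b : A0 a -> A0 b -> A0 (a + b).
  by case=> [Aa|->]; case=> [Ab|->]; rewrite ?addr0 ?add0r; [left; apply: AD|left|left|right].
have A0Z c a : A0 a -> A0 (c *: a).
  by case=> [Aa|->]; [left; apply: AZ|right; rewrite scaler0].
exists A0; split=> //; [by right | by case=> // /eqP; rewrite (negbTE xn0) |].
move=> y; pose B z := exists m (c : k), A0 m /\ z = m + c *: y.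
have [[m [c [A0m xE]]]|nBx] := classic (B x).
  have [c0|cn0] := eqVneq c 0.
    have : A0 x by rewrite xE c0 scale0r addr0.
    by case=> // /eqP; rewrite (negbTE xn0).
  exists c^-1; have -> : y - c^-1 *: x = (- c^-1) *: m.
    by rewrite xE scalerDr scalerA mulVf // scale1r opprD addrCA subrr addr0 scaleNr.
  exact: A0Z.
have PB : P B.
  split=> //; split.
  - move=> _ _ [m [c [Am ->]]] [m' [c' [Am' ->]]]; exists (m + m'), (c + c').
    by split; [apply: A0D | rewrite scalerDl addrACA].
  - move=> d _ [m [c [Am ->]]]; exists (d *: m), (d * c).
    by split; [apply: A0Z | rewrite scalerDr scalerA].
have AB : (A `<=` B)%classic by move=> z Az; exists z, 0; split; [left|rewrite scale0r addr0].
have BA : (B `<=` A)%classic by apply: NNPP => nBA; apply: (Amax B (conj AB nBA)).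
exists 0; rewrite scale0r subr0; left; apply: BA.
by exists 0, 1; split; [right|rewrite add0r scale1r].
Qed.

Lemma separating_functional (x : U) : x != 0 -> exists f : U -> k, scalar f /\ f x = 1.
Proof.
move=> /line_complement [M [[MD MZ] M0 Mx Mcompl]].
have uniq y c c' : M (y - c *: x) -> M (y - c' *: x) -> c = c'.
  move=> h h'; apply: NNPP => ne.
  have : M ((c' - c) *: x).
    have -> : (c' - c) *: x = (y - c *: x) + (-1) *: (y - c' *: x).
      by rewrite scaleN1r opprB scalerBl [in RHS]addrC addrA subrK.
    exact: MD h (MZ _ _ h').
  move/(MZ (c' - c)^-1); rewrite scalerA mulVf ?scale1r //.
  by rewrite subr_eq0; apply/eqP => e; apply: ne.
pose f y := proj1_sig (constructive_indefinite_description _ (Mcompl y)).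
have fP y : M (y - f y *: x) by rewrite /f; case: constructive_indefinite_description.
exists f; split; last by apply: uniq (fP x) _; rewrite scale1r subrr.
move=> c y z; apply: uniq (fP _) _.
have -> : c *: y + z - (c * f y + f z) *: x = c *: (y - f y *: x) + (z - f z *: x).
  by rewrite scalerDl scalerBr scalerA opprD addrACA.
by apply: MD; [apply: MZ|].
Qed.

Lemma functionals_separate (x y : U) : (forall f, scalar f -> f x = f y) -> x = y.
Proof.
move=> h; apply/eqP; rewrite -subr_eq0; apply/negPn/negP => /separating_functional.
case=> f [hf f1]; move: (h f hf) => /eqP; rewrite -subr_eq0 -(scalar_mapB hf) f1.
by rewrite oner_eq0.
Qed.

Lemma functionals_separate_scaled (x y v : U) : v != 0 ->
  (forall f, scalar f -> f x *: v = f y *: v) -> x = y.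
Proof.
move=> vn0 h; apply: functionals_separate => f hf; apply/eqP; rewrite -subr_eq0.
by have /eqP := h f hf; rewrite -subr_eq0 -scalerBl scaler_eq0 (negbTE vn0) orbF.
Qed.

End Separation.

Section FiniteFamilies.
Variables (k : fieldType) (U : lmodType k).

(* Any finite family of vectors is reproduced by finitely many functionals f i and
   vectors v i as x = sum_i f i x *: v i: each new vector not yet reproduced adds
   the direction of its defect, detected by a separating functional. *)
Lemma finite_coordinates (xs : seq U) : exists n (f : 'I_n -> U -> k) (v : 'I_n -> U),
  (forall i, scalar (f i)) /\ forall x, x \in xs -> \sum_(i < n) f i x *: v i = x.
Proof.
elim: xs => [|x xs [n [f [v [hf hx]]]]].
  by exists 0, (fun _ _ => 0), (fun _ => 0); split=> // i; case: i.
pose P y := y - \sum_(i < n) f i y *: v i.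
have linP : linear P.
  by apply: linear_sub => //; apply: linear_sum_maps => i; apply: linear_scale_by.
have P0 z : z \in xs -> P z = 0 by move=> /hx e; rewrite /P e subrr.
have [Px0|/separating_functional [g [hg g1]]] := eqVneq (P x) 0.
  exists n, f, v; split => // z; rewrite inE => /orP [/eqP -> | /hx //].
  by apply/eqP; move/eqP: Px0; rewrite /P subr_eq0 eq_sym.
exists n.+1, (fun i => if unlift ord0 i is Some j then f j else fun y => g (P y)).
exists (fun i => if unlift ord0 i is Some j then v j else P x); split.
  by move=> i; case: (unlift ord0 i) => [j|]; [apply: hf | apply: scalar_comp].
move=> z zxs; rewrite big_ord_recl /= unlift_none.
under eq_bigr do rewrite liftK.
move: zxs; rewrite inE => /orP [/eqP -> | zs]; first by rewrite g1 scale1r /P subrK.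
by rewrite P0 // scalar_map0 // scale0r add0r hx.
Qed.

Lemma fin_dim_of_separating (I : eqType) (s : seq I) (p : I -> U -> k) (P : U -> Prop) :
  (forall i, scalar (p i)) -> (forall c x y, P x -> P y -> P (c *: x + y)) ->
  (forall a, P a -> (forall i, i \in s -> p i a = 0) -> a = 0) -> fin_dim P.
Proof.
move=> hp; elim: s P => [|i s IH] P hcl hinj.
  by exists [::] => x Px; exists (fun _ => 0); rewrite big_ord0; apply: hinj.
have [[a0 [Pa0 pa0]]|nex] := classic (exists a0, P a0 /\ p i a0 != 0); last first.
  apply: IH => // a Pa za; apply: hinj => // j; rewrite inE => /orP [/eqP -> | /za //].
  by apply: NNPP => ne; apply: nex; exists a; split=> //; apply/eqP.
have P0 : P 0 by have := hcl (-1) _ _ Pa0 Pa0; rewrite scaleN1r addNr.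
pose a1 := (p i a0)^-1 *: a0.
have Pa1 : P a1 by have := hcl (p i a0)^-1 _ _ Pa0 P0; rewrite addr0.
have pa1 : p i a1 = 1 by rewrite /a1 (scalar_mapZ (hp i)) mulVf.
have [s' hs'] : fin_dim (fun a => P a /\ p i a = 0).
  apply: IH; last first.
    move=> a [Pa pa] za; apply: hinj => // j; rewrite inE => /orP [/eqP -> // | /za //].
  move=> c x y [Px px] [Py py]; split; first exact: hcl.
  by rewrite (hp i) px py mulr0 addr0.
exists (a1 :: s') => x Px.
have [c hc] : exists c : 'I_(size s') -> k, x - p i x *: a1 = \sum_(j < size s') c j *: s'`_j.
  apply: hs'; split; first by rewrite addrC -scaleNr; apply: hcl.
  by rewrite (scalar_mapB (hp i)) (scalar_mapZ (hp i)) pa1 mulr1 subrr.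
exists (fun j => if unlift ord0 j is Some j' then c j' else p i x).
rewrite big_ord_recl /= unlift_none.
under eq_bigr do rewrite liftK.
by rewrite -hc addrC subrK.
Qed.

End FiniteFamilies.

Section TensorIdentities.
Variables (k : fieldType) (H : algType k) (W : lmodType k).

Definition bilinear_map (B : H -> H -> W) : Prop :=
  (forall y, linear (fun x => B x y)) /\ (forall x, linear (B x)).

Definition trilinear_map (C : H -> H -> H -> W) : Prop :=
  [/\ forall y z, linear (fun x => C x y z), forall x z, linear (fun y => C x y z)
    & forall x y, linear (C x y)].

Lemma bilinear_scale_by (f : H -> k) (F : H -> W) : scalar f -> linear F ->
  bilinear_map (fun x y => f x *: F y).
Proof. by move=> hf hF; split=> [y|x]; [apply: linear_scale_by | apply: linear_scale]. Qed.

Lemma bilinear_sum_slices (B : H -> H -> W) n (f : 'I_n -> H -> k) (v : 'I_n -> H)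
    (t : seq (H * H)) : bilinear_map B ->
  (forall p, p \in t -> \sum_(i < n) f i p.1 *: v i = p.1) ->
  \sum_(p <- t) B p.1 p.2 = \sum_(i < n) B (v i) (slice_l (f i) t).
Proof.
move=> [hB1 hB2] ht.
transitivity (\sum_(p <- t) \sum_(i < n) B (v i) (f i p.1 *: p.2)).
  rewrite big_seq_cond [RHS]big_seq_cond; apply: eq_bigr => p /andP [pt _].
  rewrite -{1}(ht p pt) (linear_map_sum (hB1 p.2)); apply: eq_bigr => i _.
  by rewrite (linear_mapZ (hB1 _)) (linear_mapZ (hB2 _)).
by rewrite exchange_big; apply: eq_bigr => i _; rewrite (linear_map_sum (hB2 _)).
Qed.

Lemma teq2_bilinear (t t' : seq (H * H)) (B : H -> H -> W) : teq2 t t' -> bilinear_map B ->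
  \sum_(p <- t) B p.1 p.2 = \sum_(p <- t') B p.1 p.2.
Proof.
move=> ht hB; have [n [f [v [hf hx]]]] := finite_coordinates [seq p.1 | p <- t ++ t'].
rewrite (bilinear_sum_slices (f := f) (v := v) (t := t) hB); last first.
  by move=> p pt; apply: hx; apply/mapP; exists p; rewrite // mem_cat pt.
rewrite (bilinear_sum_slices (f := f) (v := v) (t := t') hB); last first.
  by move=> p pt; apply: hx; apply/mapP; exists p; rewrite // mem_cat pt orbT.
by apply: eq_bigr => i _; rewrite (ht _ (hf i)).
Qed.

Lemma trilinear_sum_slices (C : H -> H -> H -> W) n (f : 'I_n -> H -> k) (v : 'I_n -> H)
    m (g : 'I_m -> H -> k) (w : 'I_m -> H) (T : seq (H * H * H)) : trilinear_map C ->
  (forall p, p \in T -> \sum_(i < n) f i p.1.1 *: v i = p.1.1) ->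
  (forall p, p \in T -> \sum_(j < m) g j p.1.2 *: w j = p.1.2) ->
  \sum_(p <- T) C p.1.1 p.1.2 p.2 =
  \sum_(i < n) \sum_(j < m) C (v i) (w j) (\sum_(p <- T) (f i p.1.1 * g j p.1.2) *: p.2).
Proof.
move=> [h1 h2 h3] hf hg.
transitivity (\sum_(p <- T) \sum_(i < n) \sum_(j < m)
                C (v i) (w j) ((f i p.1.1 * g j p.1.2) *: p.2)).
  rewrite big_seq_cond [RHS]big_seq_cond; apply: eq_bigr => p /andP [pT _].
  rewrite -{1}(hf p pT) -{1}(hg p pT) (linear_map_sumZ (h1 _ _)).
  apply: eq_bigr => i _; rewrite (linear_map_sumZ (h2 _ _)) scaler_sumr.
  by apply: eq_bigr => j _; rewrite (linear_mapZ (h3 _ _)) scalerA.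
rewrite exchange_big; apply: eq_bigr => i _.
by rewrite exchange_big; apply: eq_bigr => j _; rewrite (linear_map_sum (h3 _ _)).
Qed.

Lemma teq3_trilinear (T T' : seq (H * H * H)) (C : H -> H -> H -> W) :
  teq3 T T' -> trilinear_map C ->
  \sum_(p <- T) C p.1.1 p.1.2 p.2 = \sum_(p <- T') C p.1.1 p.1.2 p.2.
Proof.
move=> hT hC.
have [n [f [v [hf hx]]]] := finite_coordinates [seq p.1.1 | p <- T ++ T'].
have [m [g [w [hg hy]]]] := finite_coordinates [seq p.1.2 | p <- T ++ T'].
rewrite (trilinear_sum_slices (f := f) (v := v) (g := g) (w := w) (T := T) hC); first last.
- by move=> p pT; apply: hy; apply/mapP; exists p; rewrite // mem_cat pT.
- by move=> p pT; apply: hx; apply/mapP; exists p; rewrite // mem_cat pT.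
rewrite (trilinear_sum_slices (f := f) (v := v) (g := g) (w := w) (T := T') hC); first last.
- by move=> p pT; apply: hy; apply/mapP; exists p; rewrite // mem_cat pT orbT.
- by move=> p pT; apply: hx; apply/mapP; exists p; rewrite // mem_cat pT orbT.
by apply: eq_bigr => i _; apply: eq_bigr => j _; rewrite (hT _ _ (hf i) (hg j)).
Qed.

Lemma sum_tmul2 (B : H -> H -> W) (t t' : seq (H * H)) :
  \sum_(p <- tmul2 t t') B p.1 p.2 = \sum_(p <- t) \sum_(q <- t') B (p.1 * q.1) (p.2 * q.2).
Proof. by rewrite /tmul2 big_allpairs_dep. Qed.

Lemma sum_tmul2_1 (B : H -> H -> W) (t : seq (H * H)) (a b : H) :
  \sum_(p <- tmul2 t [:: (a, b)]) B p.1 p.2 = \sum_(p <- t) B (p.1 * a) (p.2 * b).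
Proof. by rewrite sum_tmul2; apply: eq_bigr => p _; rewrite big_seq1. Qed.

End TensorIdentities.

Section Slices.
Variables (k : fieldType) (H : algType k) (D : H -> seq (H * H)) (Lt : H).

Lemma Uslice_pairing g nu : lfun g -> lfun nu ->
  g (Uslice D Lt nu) = nu (slice_l g (D Lt)).
Proof.
move=> hg hnu; rewrite /Uslice /slice_r /slice_l (scalar_map_sum hg) (scalar_map_sum hnu).
by apply: eq_bigr => p _; rewrite (scalar_mapZ hg) (scalar_mapZ hnu) mulrC.
Qed.

(* U : V_Lt' -> _Lt V, nu |-> (id (x) nu) Delta(Lt), is well defined and injective on
   V_Lt' (functionals up to agreement on V_Lt), linear and A_Lt-equivariant. *)
Lemma Uslice_agree nu mu : lfun nu -> lfun mu ->
  (forall v, Vl D Lt v -> nu v = mu v) -> Uslice D Lt nu = Uslice D Lt mu.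
Proof.
move=> hnu hmu hag; apply: functionals_separate => g hg.
by rewrite !Uslice_pairing // hag //; exists g.
Qed.

Lemma Uslice_inj nu mu : lfun nu -> lfun mu ->
  Uslice D Lt nu = Uslice D Lt mu -> forall v, Vl D Lt v -> nu v = mu v.
Proof. by move=> hnu hmu hU _ [g [hg ->]]; rewrite -!Uslice_pairing // hU. Qed.

Lemma Uslice_linear c nu mu :
  Uslice D Lt (fun x => c * nu x + mu x) = c *: Uslice D Lt nu + Uslice D Lt mu.
Proof.
rewrite /Uslice /slice_r scaler_sumr -big_split; apply: eq_bigr => p _.
by rewrite scalerDl scalerA.
Qed.

End Slices.

Section HopfAlgebra.
Variables (k : fieldType) (H : algType k) (D : H -> seq (H * H)) (e : H -> k) (S : H -> H).
Hypothesis hopf : is_hopf D e S.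

Lemma linear_antipode : linear S.
Proof. exact: ant_lin hopf. Qed.

Lemma antipode_one : S 1 = 1.
Proof.
have hB : bilinear_map (fun x y => S x * y).
  by split=> [y|x]; [apply: linear_comp (linear_mulr y) linear_antipode | apply: linear_mull].
have := ant_l hopf 1; rewrite (teq2_bilinear (cop_one hopf) hB) big_seq1 /= (eps_one hopf).
by rewrite mulr1 scale1r.
Qed.

Section Sums.
Variables (W : lmodType k).

Lemma linear_coproduct_sum (G : H -> H -> W) : bilinear_map G ->
  linear (fun y => \sum_(q <- D y) G q.1 q.2).
Proof.
move=> hG c x y; rewrite (teq2_bilinear (cop_lin hopf c x y) hG) big_cat /tscale big_map.
by rewrite scaler_sumr; congr (_ + _); apply: eq_bigr => p _; rewrite (linear_mapZ (hG.1 _)).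
Qed.

Lemma coassoc_sum (C : H -> H -> H -> W) (x : H) : trilinear_map C ->
  \sum_(p <- D x) \sum_(q <- D p.1) C q.1 q.2 p.2 =
  \sum_(p <- D x) \sum_(q <- D p.2) C p.1 q.1 q.2.
Proof. by move=> hC; have := teq3_trilinear (coassoc hopf x) hC; rewrite !big_allpairs_dep. Qed.

Lemma antipode_collapse_l (G : H -> H -> W) (x : H) : bilinear_map G ->
  \sum_(p <- D x) \sum_(q <- D p.1) G (S q.1 * q.2) p.2 = G 1 x.
Proof.
move=> [hG1 hG2]; rewrite -{2}(counit_l hopf x) (linear_map_sum (hG2 1)).
apply: eq_bigr => p _; rewrite -(linear_map_sum (hG1 p.2)) (ant_l hopf).
by rewrite (linear_mapZ (hG1 _)) (linear_mapZ (hG2 _)).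
Qed.

Lemma antipode_collapse_r (G : H -> H -> W) (x : H) : bilinear_map G ->
  \sum_(p <- D x) \sum_(q <- D p.1) G (q.1 * S q.2) p.2 = G 1 x.
Proof.
move=> [hG1 hG2]; rewrite -{2}(counit_l hopf x) (linear_map_sum (hG2 1)).
apply: eq_bigr => p _; rewrite -(linear_map_sum (hG1 p.2)) (ant_r hopf).
by rewrite (linear_mapZ (hG1 _)) (linear_mapZ (hG2 _)).
Qed.

Lemma antipode_collapse_second (G : H -> H -> W) (x : H) : bilinear_map G ->
  \sum_(p <- D x) \sum_(q <- D p.2) G p.1 (S q.1 * q.2) = G x 1.
Proof.
move=> [hG1 hG2]; rewrite -{2}(counit_r hopf x) (linear_map_sum (hG1 1)).
apply: eq_bigr => p _; rewrite -(linear_map_sum (hG2 p.1)) (ant_l hopf).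
by rewrite (linear_mapZ (hG1 _)) (linear_mapZ (hG2 _)).
Qed.

End Sums.

(* If (y (x) 1) Delta(t) = 0 for some t != 0 then y = 0: apply
   u (x) v |-> u S(v_(1)) (x) v_(2), which by coassociativity sends
   (y (x) 1) Delta(t) to y (x) t. *)
Lemma coproduct_left_factor_inj (t y : H) : t != 0 ->
  teq2 [seq (y * p.1, p.2) | p <- D t] [::] -> y = 0.
Proof.
move=> tn0 ht; apply: (functionals_separate_scaled tn0) => f hf.
rewrite scalar_map0 // scale0r.
pose B u v := \sum_(q <- D v) f (u * S q.1) *: q.2.
have hB : bilinear_map B.
  split=> [v|u].
    apply: linear_sum_maps => q; apply: linear_scale_by.
    exact: scalar_comp hf (linear_mulr _).
  apply: (linear_coproduct_sum (G := fun a b => f (u * S a) *: b)); split=> [b|a].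
    by apply: linear_scale_by; apply: scalar_comp hf (linear_comp (linear_mull u) linear_antipode).
  exact: linear_scale.
have := teq2_bilinear ht hB; rewrite big_nil big_map /B /= => zero.
pose C x u (w : H) := f (y * (x * S u)) *: w.
have hC : trilinear_map C.
  split=> [u w|x w|x u].
  - apply: linear_scale_by; apply: scalar_comp hf (linear_comp (linear_mull y) _).
    exact: linear_mulr.
  - apply: linear_scale_by; apply: scalar_comp hf (linear_comp (linear_mull y) _).
    exact: linear_comp (linear_mull x) linear_antipode.
  - exact: linear_scale.
have hG : bilinear_map (fun u w => f (y * u) *: w).
  split=> [w|u]; last exact: linear_scale.
  by apply: linear_scale_by; apply: scalar_comp hf (linear_mull y).
rewrite -[y in f y]mulr1 -(antipode_collapse_r t hG) /=; apply: etrans zero.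
have := coassoc_sum t hC; rewrite /C => ->.
by apply: eq_bigr => p _; apply: eq_bigr => q _; rewrite mulrA.
Qed.

Section CoidealSubalgebra.
Variable Lt : H.
Hypothesis Lt_neq0 : Lt != 0.

Lemma pi_rel_sum (W : lmodType k) (B : H -> H -> W) a b : pi_rel D Lt a b ->
  bilinear_map B -> \sum_(p <- D a) B p.1 (p.2 * Lt) = B b Lt.
Proof.
move=> hab hB; have := teq2_bilinear hab hB; rewrite sum_tmul2_1 big_seq1 /= => <-.
by apply: eq_bigr => p _; rewrite mulr1.
Qed.

Lemma pi_relP a b :
  (forall f, lfun f -> \sum_(p <- D a) f p.1 *: (p.2 * Lt) = f b *: Lt) -> pi_rel D Lt a b.
Proof.
move=> h f hf; rewrite /slice_l (sum_tmul2_1 (fun x y => f x *: y)) big_seq1 /= -h //.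
by apply: eq_bigr => p _; rewrite mulr1.
Qed.

Lemma pi_rel_unique a b b' : pi_rel D Lt a b -> pi_rel D Lt a b' -> b = b'.
Proof.
move=> h h'; apply: (functionals_separate_scaled Lt_neq0) => f hf.
have hB := bilinear_scale_by hf (@linear_id _ H).
by rewrite -(pi_rel_sum h hB) -(pi_rel_sum h' hB).
Qed.

Lemma piA_spec a : Acoid D Lt a -> pi_rel D Lt a (piA D Lt a).
Proof. by move=> h; apply: epsilon_spec. Qed.

Lemma piA_eq a b : pi_rel D Lt a b -> piA D Lt a = b.
Proof. by move=> h; apply: pi_rel_unique (piA_spec (ex_intro _ b h)) h. Qed.

Lemma pi_rel_linear c a b a' b' : pi_rel D Lt a b -> pi_rel D Lt a' b' ->
  pi_rel D Lt (c *: a + a') (c *: b + b').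
Proof.
move=> h h'; apply: pi_relP => f hf.
have hB := bilinear_scale_by hf (@linear_id _ H).
rewrite (linear_coproduct_sum (bilinear_scale_by hf (linear_mulr Lt))) /=.
by rewrite (pi_rel_sum h hB) (pi_rel_sum h' hB) hf scalerDl scalerA.
Qed.

Lemma pi_rel_one : pi_rel D Lt 1 1.
Proof.
apply: pi_relP => f hf.
have hG := bilinear_scale_by hf (linear_mulr Lt).
by rewrite (teq2_bilinear (cop_one hopf) hG) big_seq1 /= mul1r.
Qed.

Lemma pi_rel_mul a b a' b' : pi_rel D Lt a b -> pi_rel D Lt a' b' ->
  pi_rel D Lt (a * a') (b * b').
Proof.
move=> h h'; apply: pi_relP => f hf.
have hG := bilinear_scale_by hf (linear_mulr Lt).
rewrite (teq2_bilinear (cop_mul hopf a a') hG) (sum_tmul2 (fun x y => f x *: (y * Lt))).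
transitivity (\sum_(p <- D a) f (p.1 * b') *: (p.2 * Lt)).
  apply: eq_bigr => p _.
  have hB := bilinear_scale_by (scalar_comp hf (linear_mull p.1)) (@linear_id _ H).
  rewrite scalerAr -(pi_rel_sum h' hB) mulr_sumr; apply: eq_bigr => q _.
  by rewrite -scalerAr mulrA.
exact: (pi_rel_sum h (bilinear_scale_by (scalar_comp hf (linear_mulr b')) (@linear_id _ H))).
Qed.

Lemma piA_one : piA D Lt 1 = 1.
Proof. exact: piA_eq pi_rel_one. Qed.

(* pi is injective: apply x (x) y |-> x_(1) (x) S(x_(2)) y to Delta(a)(1 (x) Lt); by
   coassociativity and the antipode axiom the result is a (x) Lt, so pi(a) = 0 forces
   a = 0. *)
Lemma pi_rel_zero a : pi_rel D Lt a 0 -> a = 0.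
Proof.
move=> ha0; apply: (functionals_separate_scaled Lt_neq0) => f hf.
rewrite scalar_map0 // scale0r.
pose B x y := \sum_(q <- D x) f q.1 *: (S q.2 * y).
have hB : bilinear_map B.
  split=> [y|x].
    apply: (linear_coproduct_sum (G := fun u v => f u *: (S v * y))).
    exact: bilinear_scale_by hf (linear_comp (linear_mulr y) linear_antipode).
  by apply: linear_sum_maps => q; apply: linear_scale; apply: linear_mull.
pose C x u w := f x *: (S u * (w * Lt)).
have hC : trilinear_map C.
  split=> [u w|x w|x u]; first exact: linear_scale_by.
  - by apply: linear_scale; apply: linear_comp (linear_mulr _) linear_antipode.
  - by apply: linear_scale; apply: linear_comp (linear_mull _) (linear_mulr Lt).
have hG := bilinear_scale_by hf (linear_mulr Lt).
have := pi_rel_sum ha0 hB; rewrite (linear_map0 (hB.1 Lt)) => <-.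
rewrite -{1}[Lt]mul1r -(antipode_collapse_second a hG) /=.
transitivity (\sum_(p <- D a) \sum_(q <- D p.2) C p.1 q.1 q.2).
  by apply: eq_bigr => p _; apply: eq_bigr => q _; rewrite /C mulrA.
by rewrite -(coassoc_sum a hC).
Qed.

(* The main identity (1 (x) a) Delta(Lt) = (S(b) (x) 1) Delta(Lt) for pi(a) = b, sliced by
   a functional f on the first leg: expand Delta(S(b)) against Delta(a)(1 (x) Lt) and
   collapse S(a_(1)) a_(2) by coassociativity. *)
Lemma twist_slice a b f : pi_rel D Lt a b -> lfun f ->
  \sum_(p <- D Lt) f p.1 *: (a * p.2) = \sum_(p <- D Lt) f (S b * p.1) *: p.2.
Proof.
move=> hab hf.
pose G u z := \sum_(q <- D Lt) f (u * q.1) *: (z * q.2).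
have hG : bilinear_map G.
  split=> [z|u]; apply: linear_sum_maps => q.
    by apply: linear_scale_by; apply: scalar_comp hf (linear_mulr _).
  by apply: linear_scale; apply: linear_mulr.
pose C x y z := \sum_(q <- D Lt) f (S x * (y * q.1)) *: (z * q.2).
have hC : trilinear_map C.
  split=> [y z|x z|x y]; apply: linear_sum_maps => q.
  - apply: linear_scale_by; apply: scalar_comp hf _.
    exact: linear_comp (linear_mulr _) linear_antipode.
  - apply: linear_scale_by; apply: scalar_comp hf _.
    exact: linear_comp (linear_mull _) (linear_mulr _).
  - by apply: linear_scale; apply: linear_mulr.
have hB x : bilinear_map (fun u v => f (S x * u) *: v).
  exact: bilinear_scale_by (scalar_comp hf (linear_mull _)) (@linear_id _ H).
pose Bf x y := \sum_(q <- D y) f (S x * q.1) *: q.2.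
have hBf : bilinear_map Bf.
  split=> [y|x]; last exact: linear_coproduct_sum (hB x).
  apply: linear_sum_maps => q; apply: linear_scale_by.
  exact: scalar_comp hf (linear_comp (linear_mulr q.1) linear_antipode).
symmetry; transitivity (Bf b Lt) => //; rewrite -(pi_rel_sum hab hBf).
transitivity (\sum_(p <- D a) \sum_(r <- D p.2) C p.1 r.1 r.2).
  apply: eq_bigr => p _; rewrite /Bf (teq2_bilinear (cop_mul hopf p.2 Lt) (hB p.1)).
  by rewrite (sum_tmul2 (fun u v => f (S p.1 * u) *: v)).
rewrite -(coassoc_sum a hC).
transitivity (G 1 a); last by apply: eq_bigr => q _; rewrite mul1r.
rewrite -(antipode_collapse_l a hG); apply: eq_bigr => p _; apply: eq_bigr => r _.
by apply: eq_bigr => q _; rewrite mulrA.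
Qed.

Lemma coproduct_twist a b : pi_rel D Lt a b ->
  teq2 [seq (p.1, a * p.2) | p <- D Lt] [seq (S b * p.1, p.2) | p <- D Lt].
Proof. by move=> hab f hf; rewrite /slice_l !big_map; apply: twist_slice. Qed.

Lemma twist_right_slice a b f : pi_rel D Lt a b -> lfun f ->
  S b * slice_r f (D Lt) = slice_r (fun x => f (a * x)) (D Lt).
Proof.
move=> hab hf.
have hB : bilinear_map (fun x y => f y *: x).
  by split=> [y|x]; [apply: linear_scale; apply: linear_id | apply: linear_scale_by].
have := teq2_bilinear (coproduct_twist hab) hB; rewrite /slice_r !big_map /= => ->.
by rewrite mulr_sumr; apply: eq_bigr => p _; rewrite scalerAr.
Qed.

Lemma twist_left_slice a b f : pi_rel D Lt a b -> lfun f ->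
  a * slice_l f (D Lt) = slice_l (fun x => f (S b * x)) (D Lt).
Proof.
move=> hab hf; rewrite /slice_l mulr_sumr -(twist_slice hab hf).
by apply: eq_bigr => p _; rewrite scalerAr.
Qed.

(* A_Lt acts faithfully on V_Lt: a V_Lt = 0 forces (S(pi a) (x) 1) Delta(Lt) = 0, hence
   pi(a) = 0 since S is injective, hence a = 0. *)
Lemma Vl_faithful_rel a b : pi_rel D Lt a b ->
  (forall f, lfun f -> a * slice_l f (D Lt) = 0) -> a = 0.
Proof.
move=> hab hV; apply: pi_rel_zero; have [Sinv SK _] := ant_bij hopf.
suff Sb0 : S b = S 0 by rewrite -(can_inj SK Sb0).
rewrite (linear_map0 linear_antipode).
apply: (coproduct_left_factor_inj Lt_neq0) => f hf.
rewrite /slice_l big_nil big_map; apply: etrans (hV f hf).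
by rewrite (twist_left_slice hab hf).
Qed.

Lemma Vl_left_ideal a v : Acoid D Lt a -> Vl D Lt v -> Vl D Lt (a * v).
Proof.
move=> [b hab] [f [hf ->]]; exists (fun x => f (S b * x)).
by split; [apply: scalar_comp hf (linear_mull _) | apply: twist_left_slice].
Qed.

Lemma Vl_faithful a : Acoid D Lt a -> (forall v, Vl D Lt v -> a * v = 0) -> a = 0.
Proof. by move=> [b hab] hz; apply: (Vl_faithful_rel hab) => f hf; apply: hz; exists f. Qed.

Lemma Vr_action a f : Acoid D Lt a -> lfun f ->
  S (piA D Lt a) * slice_r f (D Lt) = slice_r (fun x => f (a * x)) (D Lt).
Proof. by move=> ha hf; apply: twist_right_slice (piA_spec ha) hf. Qed.

Lemma Acoid_linear c a a' : Acoid D Lt a -> Acoid D Lt a' -> Acoid D Lt (c *: a + a').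
Proof. by move=> [b h] [b' h']; exists (c *: b + b'); apply: pi_rel_linear. Qed.

Lemma Acoid_mul a a' : Acoid D Lt a -> Acoid D Lt a' -> Acoid D Lt (a * a').
Proof. by move=> [b h] [b' h']; exists (b * b'); apply: pi_rel_mul. Qed.

Lemma Vl_finite_span : exists n (g : 'I_n -> H -> k) (w : 'I_n -> H),
  (forall i, scalar (g i)) /\
  forall f, lfun f -> slice_l f (D Lt) = \sum_(i < n) f (w i) *: slice_l (g i) (D Lt).
Proof.
have [n [g [w [hg hw]]]] := finite_coordinates [seq p.1 | p <- D Lt].
exists n, g, w; split=> // f hf.
apply: (bilinear_sum_slices (B := fun x y => f x *: y)).
  exact: bilinear_scale_by hf (@linear_id _ H).
by move=> p pD; apply: hw; apply/mapP; exists p.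
Qed.

Lemma Vl_coordinates : exists m (g : 'I_m -> H -> k) (w : 'I_m -> H),
  (forall j, scalar (g j)) /\ forall v, Vl D Lt v -> \sum_(j < m) g j v *: w j = v.
Proof.
have [m [g [w [hg hw]]]] := finite_coordinates [seq p.2 | p <- D Lt].
exists m, g, w; split=> // _ [f [hf ->]].
have hR : linear (fun x => \sum_(j < m) g j x *: w j).
  by apply: linear_sum_maps => j; apply: linear_scale_by.
rewrite /slice_l (linear_map_sumZ hR) big_seq [RHS]big_seq; apply: eq_bigr => p pD.
by rewrite hw //; apply/mapP; exists p.
Qed.

(* A_Lt is finite dimensional: a is determined by the finitely many coordinates of the
   products a v_i, v_i spanning V_Lt, since A_Lt acts faithfully on V_Lt. *)
Lemma Acoid_fin_dim : fin_dim (Acoid D Lt).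
Proof.
have [n [g [w [hg Vspan]]]] := Vl_finite_span.
have [m [h [u [hh Vcoord]]]] := Vl_coordinates.
pose v i := slice_l (g i) (D Lt).
apply: (@fin_dim_of_separating _ _ _ (enum {: 'I_n * 'I_m}) (fun ij x => h ij.2 (x * v ij.1))).
- by move=> ij; apply: scalar_comp (hh _) (linear_mulr _).
- by move=> c a a'; apply: Acoid_linear.
move=> a [b hab] za; apply: (Vl_faithful_rel hab) => f hf.
rewrite Vspan // mulr_sumr big1 // => i _; rewrite -scalerAr.
have Vav : Vl D Lt (a * v i).
  by apply: Vl_left_ideal; [exists b | exists (g i); split; [apply: hg |]].
rewrite -(Vcoord _ Vav) big1 ?scaler0 // => j _.
by rewrite (za (i, j)) ?scale0r // mem_enum.
Qed.

Lemma Vr_stable a x : Acoid D Lt a -> Vr D Lt x -> Vr D Lt (S (piA D Lt a) * x).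
Proof.
move=> ha [f [hf ->]]; exists (fun x => f (a * x)); rewrite Vr_action //.
by split=> //; apply: scalar_comp hf (linear_mull _).
Qed.

Lemma Vr_action_mul a b x : Acoid D Lt a -> Acoid D Lt b -> Vr D Lt x ->
  S (piA D Lt b) * (S (piA D Lt a) * x) = S (piA D Lt (a * b)) * x.
Proof.
move=> ha hb [f [hf ->]]; have hfa := scalar_comp hf (linear_mull a).
rewrite !Vr_action //; last exact: Acoid_mul.
by apply: eq_bigr => p _; rewrite mulrA.
Qed.

Lemma Vr_action_linear c a b x : Acoid D Lt a -> Acoid D Lt b -> Vr D Lt x ->
  S (piA D Lt (c *: a + b)) * x = c *: (S (piA D Lt a) * x) + S (piA D Lt b) * x.
Proof.
move=> ha hb [f [hf ->]]; rewrite !Vr_action //; last exact: Acoid_linear.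
rewrite /slice_r scaler_sumr -big_split; apply: eq_bigr => p _.
by rewrite mulrDl -scalerAl hf scalerDl scalerA.
Qed.

Lemma Uslice_equivariant a nu : Acoid D Lt a -> lfun nu ->
  Uslice D Lt (fun x => nu (a * x)) = S (piA D Lt a) * Uslice D Lt nu.
Proof. by move=> ha hnu; rewrite /Uslice Vr_action. Qed.

Section IntegralType.
Variable L : H.
Hypothesis Lt_integral : pi_rel D Lt Lt L.

(* V_Lt is contained in A_Lt, with pi((f (x) id) Delta(Lt)) = (f (x) id) Delta(L):
   by coassociativity, Delta((f (x) id) Delta(Lt))(1 (x) Lt) is obtained from
   Delta(Lt)(1 (x) Lt) = L (x) Lt by applying f to the first leg of Delta(L). *)
Lemma Vl_pi_rel f : lfun f -> pi_rel D Lt (slice_l f (D Lt)) (slice_l f (D L)).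
Proof.
move=> hf; apply: pi_relP => g hg.
rewrite /slice_l (linear_map_sumZ (linear_coproduct_sum (bilinear_scale_by hg (linear_mulr Lt)))).
pose C x u w := f x *: (g u *: (w * Lt)).
have hC : trilinear_map C.
  split=> [u w|x w|x u]; first exact: linear_scale_by.
  - by apply: linear_scale; apply: linear_scale_by.
  - by do 2 apply: linear_scale; apply: linear_mulr.
transitivity (\sum_(q <- D Lt) \sum_(p <- D q.2) C q.1 p.1 p.2).
  by apply: eq_bigr => q _; rewrite scaler_sumr.
rewrite -(coassoc_sum Lt hC).
pose Bfg x (y : H) := \sum_(r <- D x) (f r.1 * g r.2) *: y.
have hB : bilinear_map Bfg.
  split=> [y|x]; last by apply: linear_sum_maps => r; apply: linear_scale; apply: linear_id.
  apply: (linear_coproduct_sum (G := fun u v => (f u * g v) *: y)); split=> [v|u].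
    by apply: linear_scale_by; apply: scalar_mulr.
  by move=> c z z'; rewrite hg mulrDr !scalerDl mulrCA scalerA.
transitivity (\sum_(q <- D Lt) Bfg q.1 (q.2 * Lt)).
  by apply: eq_bigr => q _; apply: eq_bigr => r _; rewrite /C scalerA.
rewrite (pi_rel_sum Lt_integral hB) /Bfg -scaler_suml (scalar_map_sum hg); congr (_ *: _).
by apply: eq_bigr => r _; rewrite (scalar_mapZ hg) mulrC.
Qed.

Lemma Vl_sub_Acoid v : Vl D Lt v -> Acoid D Lt v.
Proof. by move=> [f [hf ->]]; exists (slice_l f (D L)); apply: Vl_pi_rel. Qed.

(* Lt is non-degenerate (1 in V_Lt) exactly when V_Lt = A_Lt; then a = a 1 lies in the
   left ideal V_Lt. *)
Lemma nondegenerate_iff : nondegenerate_int D Lt <-> (forall x, Vl D Lt x <-> Acoid D Lt x).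
Proof.
split=> [h1 x|hVA]; last by apply/hVA; exists 1; apply: pi_rel_one.
split; first exact: Vl_sub_Acoid.
by move=> ha; rewrite -[x]mulr1; apply: Vl_left_ideal.
Qed.

End IntegralType.

End CoidealSubalgebra.

End HopfAlgebra.

Theorem mainTheorem3 (k : fieldType) (H : algType k)
  (D : H -> seq (H * H)) (e : H -> k) (S : H -> H) (L Lt : H) :
  is_hopf D e S -> integral_type D L -> L_integral_type D L Lt ->
  let A := Acoid D Lt in
  let pi := piA D Lt in
  let V := Vl D Lt in
  let W := Vr D Lt in
  (* (1 (x) a) Delta(Lt) = (S(pi a) (x) 1) Delta(Lt) *)
  (forall a, A a ->
     teq2 [seq (p.1, a * p.2) | p <- D Lt] [seq (S (pi a) * p.1, p.2) | p <- D Lt]) /\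
  (* (1) *)
  ((forall v, V v -> A v) /\
   (forall a v, A a -> V v -> V (a * v)) /\
   (forall a, A a -> (forall v, V v -> a * v = 0) -> a = 0)) /\
  (* (2) *)
  fin_dim A /\
  (* (3) right module structure x . a := S(pi a) x on W *)
  ((forall a x, A a -> W x -> W (S (pi a) * x)) /\
   (forall x, W x -> S (pi 1) * x = x) /\
   (forall a b x, A a -> A b -> W x ->
      S (pi b) * (S (pi a) * x) = S (pi (a * b)) * x) /\
   (forall c a b x, A a -> A b -> W x ->
      S (pi (c *: a + b)) * x = c *: (S (pi a) * x) + S (pi b) * x)) /\
  (* (4) U : V' -> W is an isomorphism of right A-modules;
     elements of V' are represented by functionals on H, up to agreement on V *)
  ((forall nu mu, lfun nu -> lfun mu ->
      (forall v, V v -> nu v = mu v) -> Uslice D Lt nu = Uslice D Lt mu) /\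
   (forall nu mu, lfun nu -> lfun mu ->
      Uslice D Lt nu = Uslice D Lt mu -> forall v, V v -> nu v = mu v) /\
   (forall nu, lfun nu -> W (Uslice D Lt nu)) /\
   (forall x, W x -> exists nu, lfun nu /\ Uslice D Lt nu = x) /\
   (forall c nu mu, lfun nu -> lfun mu ->
      Uslice D Lt (fun x => c * nu x + mu x) = c *: Uslice D Lt nu + Uslice D Lt mu) /\
   (forall a nu, A a -> lfun nu ->
      Uslice D Lt (fun x => nu (a * x)) = S (pi a) * Uslice D Lt nu)) /\
  (* (5) *)
  (nondegenerate_int D Lt <-> (forall x, V x <-> A x)).
Proof.
move=> hopf _ [Lt_neq0 Lt_integral] A pi V W; rewrite {}/A {}/pi {}/V {}/W.
split; [|split; [|split; [|split; [|split]]]].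
- by move=> a ha; apply: coproduct_twist hopf _ _ _ (piA_spec ha).
- split; [|split].
  + exact: Vl_sub_Acoid hopf _ _ Lt_integral.
  + by move=> a v ha hv; apply: (Vl_left_ideal hopf ha hv).
  + exact: Vl_faithful hopf _ Lt_neq0.
- exact: Acoid_fin_dim hopf _ Lt_neq0.
- split; [|split; [|split]].
  + by move=> a x ha hx; apply: (Vr_stable hopf ha hx).
  + by move=> x _; rewrite (piA_one hopf Lt_neq0) (antipode_one hopf) mul1r.
  + by move=> a b x ha hb hx; apply: (Vr_action_mul hopf ha hb hx).
  + by move=> c a b x ha hb hx; apply: (Vr_action_linear hopf c ha hb hx).
- split; [|split; [|split; [|split; [|split]]]].
  + exact: Uslice_agree.
  + exact: Uslice_inj.
  + by move=> nu hnu; exists nu.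
  + by move=> _ [nu [hnu ->]]; exists nu.
  + by move=> c nu mu _ _; apply: Uslice_linear.
  + by move=> a nu ha hnu; apply: (Uslice_equivariant hopf ha hnu).
- exact: nondegenerate_iff hopf _ _ Lt_integral.
Qed.
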